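(* Let $R$ be a ring and $M$ a right $R$-module such that the ring $\operatorname{End}_R(M)$ has no factor ring isomorphic to $\mathbb{F}_2$. Then $\operatorname{End}_R(E(M))$ also has no factor ring isomorphic to $\mathbb{F}_2$, where $E(M)$ denotes the injective hull of $M$.
   Context: All rings are associative with identity; modules are unital right modules. $\mathbb{F}_2$ is the field with two elements. A ring $T$ ''has a factor isomorphic to $\mathbb{F}_2$'' if there is a two-sided ideal $I$ of $T$ with $T/I\cong \mathbb{F}_2$, equivalently if there exists a unital ring homomorphism $T\to\mathbb{F}_2$. *)

From HB Require Import structures.
From mathcomp Require Import all_boot all_order all_algebra.
Set Implicit Arguments. Unset Strict Implicit. Unset Printing Implicit Defensive.
Import GRing.Theory.
Local Open Scope ring_scope.

(* Right R-modules are modelled as left modules over the converse ring R^c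
   (MathComp's lmodType is for left modules); scalar action  v *: a  for
   a : R^c  is the right action  v . a. *)
Notation rmodType R := (lmodType (R^c)%type).

Definition End_R (R : pzRingType) (M : rmodType R) : Type :=
  {f : M -> M | linear f}.

(* End_R(M) has a factor ring isomorphic to F_2, i.e. there is a unital
   ring homomorphism End_R(M) -> F_2 (ring operations of End_R(M):
   pointwise addition, composition, identity). *)
Definition has_F2_factor_End (R : pzRingType) (M : rmodType R) : Prop :=
  exists phi : End_R M -> 'F_2,
    [/\ forall h : linear (@id M), phi (exist _ id h) = 1,
        forall (f g : M -> M) (hf : linear f) (hg : linear g)
               (hfg : linear (f \+ g)),
          phi (exist _ (f \+ g) hfg) = phi (exist _ f hf) + phi (exist _ g hg)
      & forall (f g : M -> M) (hf : linear f) (hg : linear g)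
               (hfg : linear (f \o g)),
          phi (exist _ (f \o g) hfg) = phi (exist _ f hf) * phi (exist _ g hg)].

Definition submodule (R : pzRingType) (M : rmodType R) (S : M -> Prop) : Prop :=
  [/\ S 0, forall x y, S x -> S y -> S (x + y) & forall (a : R^c) x, S x -> S (a *: x)].

Definition injective_module (R : pzRingType) (E : rmodType R) : Prop :=
  forall (A B : rmodType R) (i : A -> B) (f : A -> E),
    linear i -> injective i -> linear f ->
    exists g : B -> E, linear g /\ (forall a, g (i a) = f a).

Definition essential_mono (R : pzRingType) (M E : rmodType R) (i : M -> E) : Prop :=
  [/\ linear i, injective i &
      forall S : E -> Prop, submodule S -> (exists x, S x /\ x <> 0) ->
        exists m, S (i m) /\ i m <> 0].

Definition injective_hull (R : pzRingType) (M E : rmodType R) (i : M -> E) : Prop :=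
  essential_mono i /\ injective_module E.

From mathcomp Require Import all_boot all_order all_algebra.
From Stdlib Require Import ClassicalEpsilon ProofIrrelevance FunctionalExtensionality.
Set Implicit Arguments. Unset Strict Implicit. Unset Printing Implicit Defensive.
Import GRing.Theory.
Local Open Scope ring_scope.

(* Let i : M -> E be an injective hull and suppose
   phi : End_R(E) -> F_2 is a unital ring homomorphism; we build one on
   End_R(M), which proves the theorem by contraposition.
   1. If d in End_R(E) vanishes on i(M), then u := 1 - d is the identity on
      i(M), hence injective on i(M), hence injective (i is essential); as E
      is injective, u has a left inverse g.  Then phi(g) phi(u) = 1 forces
      phi(u) = 1 in F_2, and so phi(d) = phi(1) - phi(u) = 0.
   2. Consequently phi(h) depends only on the restriction of h to i(M).
   3. Every g in End_R(M) extends to some G in End_R(E) (E is injective);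
      psi(g) := phi(G) is well defined by 2, and it is a unital ring
      homomorphism because G + H and G o H extend g + f and g o f. *)

Lemma F2_cases (x : 'F_2) : x = 0 \/ x = 1.
Proof. by case: x => [[|[|//]]] ?; [left|right]; apply: val_inj. Qed.

(* In F_2 every nonzero element is 1, so a right factor of 1 is 1. *)
Lemma F2_mul_eq1 (a b : 'F_2) : a * b = 1 -> b = 1.
Proof. by case: (F2_cases b) => -> //; rewrite mulr0. Qed.

(* The predicate [linear] of the definitions is a bare Prop; these are its
   basic consequences and closure properties. *)
Section LinearMaps.
Variables (S : pzRingType) (U V W : lmodType S).

Lemma lin0 (f : U -> V) : linear f -> f 0 = 0.
Proof. by move=> hf; have := hf (-1) 0 0; rewrite scaler0 addr0 scaleN1r addNr. Qed.

Lemma linD (f : U -> V) : linear f -> forall x y, f (x + y) = f x + f y.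
Proof. by move=> hf x y; have := hf 1 x y; rewrite !scale1r. Qed.

Lemma linZ (f : U -> V) : linear f -> forall a x, f (a *: x) = a *: f x.
Proof. by move=> hf a x; have := hf a x 0; rewrite !addr0 (lin0 hf) addr0. Qed.

Lemma linB (f : U -> V) : linear f -> forall x y, f (x - y) = f x - f y.
Proof. by move=> hf x y; rewrite linD // -scaleN1r linZ // scaleN1r. Qed.

Lemma lin_id : linear (@id U).
Proof. by []. Qed.

Lemma lin_comp (f : V -> W) (g : U -> V) : linear f -> linear g -> linear (f \o g).
Proof. by move=> hf hg a u v; rewrite /= hg hf. Qed.

Lemma lin_add (f g : U -> V) : linear f -> linear g -> linear (f \+ g).
Proof.
move=> hf hg a u v; rewrite /= hf hg scalerDr -!addrA.
by congr (_ + _); rewrite addrCA.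
Qed.

Lemma lin_sub (f g : U -> V) : linear f -> linear g -> linear (f \- g).
Proof.
move=> hf hg a u v; rewrite /= hf hg scalerBr opprD -!addrA.
by congr (_ + _); rewrite addrCA.
Qed.
End LinearMaps.
Arguments lin_id {S U}.

Section ModuleFacts.
Variables (R : pzRingType) (M E : rmodType R).

Lemma ker_submodule (u : E -> E) : linear u -> submodule (fun z => u z = 0).
Proof.
move=> lu; split; first exact: lin0.
- by move=> x y ux uy; rewrite linD // ux uy addr0.
- by move=> a x ux; rewrite linZ // ux scaler0.
Qed.

Lemma essential_injective (i : M -> E) (u : E -> E) :
  essential_mono i -> linear u -> (forall m, u (i m) = 0 -> i m = 0) ->
  injective u.
Proof.
move=> [_ _ ess] lu keri x y uxy; apply/eqP; rewrite -subr_eq0.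
case: eqP => // nz.
have ker_nz : exists z, u z = 0 /\ z <> 0.
  by exists (x - y); rewrite linB // uxy subrr.
have [m [um im_nz]] := ess _ (ker_submodule lu) ker_nz.
by case: im_nz; apply: keri.
Qed.

Lemma injective_left_inverse (u : E -> E) :
  injective_module E -> linear u -> injective u ->
  exists g : E -> E, linear g /\ forall x, g (u x) = x.
Proof. by move=> injE lu uinj; apply: injE => //; apply: lin_id. Qed.

Lemma extend_endo (i : M -> E) (g : M -> M) :
  injective_module E -> linear i -> injective i -> linear g ->
  exists G : E -> E, linear G /\ forall m, G (i m) = i (g m).
Proof. by move=> injE li ii lg; apply: injE => //; apply: lin_comp. Qed.
End ModuleFacts.

Section HomomorphismOnHull.
Variables (R : pzRingType) (M E : rmodType R) (i : M -> E).
Hypothesis hull : injective_hull i.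
Variable phi : End_R E -> 'F_2.
Hypothesis phi1 : forall h : linear (@id E), phi (exist _ id h) = 1.
Hypothesis phiD : forall (f g : E -> E) (hf : linear f) (hg : linear g)
  (hfg : linear (f \+ g)),
  phi (exist _ (f \+ g) hfg) = phi (exist _ f hf) + phi (exist _ g hg).
Hypothesis phiM : forall (f g : E -> E) (hf : linear f) (hg : linear g)
  (hfg : linear (f \o g)),
  phi (exist _ (f \o g) hfg) = phi (exist _ f hf) * phi (exist _ g hg).

Lemma phi_ext (f g : E -> E) (hf : linear f) (hg : linear g) :
  f =1 g -> phi (exist _ f hf) = phi (exist _ g hg).
Proof.
move=> /functional_extensionality efg; subst g.
by rewrite (proof_irrelevance _ hf hg).
Qed.

Lemma phi_left_invertible (u g : E -> E) (lu : linear u) (lg : linear g) :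
  (forall x, g (u x) = x) -> phi (exist _ u lu) = 1.
Proof.
move=> gu; have lgu := lin_comp lg lu.
have := phiM lg lu lgu; rewrite (phi_ext lgu lin_id) // phi1.
by move/esym/F2_mul_eq1.
Qed.

Lemma phi_vanishes (d : E -> E) (ld : linear d) :
  (forall m, d (i m) = 0) -> phi (exist _ d ld) = 0.
Proof.
move=> di; have [ess injE] := hull.
have lu : linear (id \- d) by apply: lin_sub => //; apply: lin_id.
have u_inj : injective (id \- d).
  by apply: essential_injective ess lu _ => m /=; rewrite di subr0.
have [g [lg gu]] := injective_left_inverse injE lu u_inj.
have lud : linear ((id \- d) \+ d) by apply: lin_add.
have := phiD lu ld lud.
rewrite (phi_ext lud lin_id) => [|x]; last by rewrite /= subrK.
rewrite phi1 (phi_left_invertible lu lg gu) => /esym.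
by rewrite -{2}[1]addr0 => /addrI.
Qed.

Lemma phi_restriction (h k : E -> E) (hh : linear h) (hk : linear k) :
  (forall m, h (i m) = k (i m)) -> phi (exist _ h hh) = phi (exist _ k hk).
Proof.
move=> hk_eq; have ld : linear (h \- k) by apply: lin_sub.
have lkd : linear (k \+ (h \- k)) by apply: lin_add.
rewrite (phi_ext hh lkd) => [|x]; last by rewrite /= addrC subrK.
by rewrite phiD (phi_vanishes ld) ?addr0 // => m; rewrite /= hk_eq subrr.
Qed.
End HomomorphismOnHull.

Lemma F2_factor_restricts (R : pzRingType) (M E : rmodType R) (i : M -> E) :
  injective_hull i -> has_F2_factor_End E -> has_F2_factor_End M.
Proof.
move=> hull [phi [phi1 phiD phiM]]; have [[li ii _] injE] := hull.
have ext (s : End_R M) :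
    {G : E -> E | linear G /\ forall m, G (i m) = i (sval s m)}.
  by apply: constructive_indefinite_description; apply: extend_endo => //; apply: svalP.
pose psi s := phi (exist _ (sval (ext s)) (proj1 (svalP (ext s)))).
have psiE (g : M -> M) (lg : linear g) (G : E -> E) (lG : linear G) :
    (forall m, G (i m) = i (g m)) -> psi (exist _ g lg) = phi (exist _ G lG).
  move=> hG; rewrite /psi; case: (ext _) => G' [lG' hG'] /=.
  by apply: (phi_restriction hull phi1 phiD phiM) => m; rewrite hG hG'.
exists psi; split.
- by move=> h; rewrite (psiE _ h _ lin_id).
- move=> f g hf hg hfg.
  have [F [lF hF]] := extend_endo injE li ii hf.
  have [G [lG hG]] := extend_endo injE li ii hg.
  rewrite (psiE _ hfg _ (lin_add lF lG)) => [|m]; last by rewrite /= hF hG (linD li).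
  by rewrite phiD (psiE _ _ _ lF hF) (psiE _ _ _ lG hG).
- move=> f g hf hg hfg.
  have [F [lF hF]] := extend_endo injE li ii hf.
  have [G [lG hG]] := extend_endo injE li ii hg.
  rewrite (psiE _ hfg _ (lin_comp lF lG)) => [|m]; last by rewrite /= hG hF.
  by rewrite phiM (psiE _ _ _ lF hF) (psiE _ _ _ lG hG).
Qed.

Theorem lemma1 (R : pzRingType) (M E : rmodType R) (i : M -> E) :
  injective_hull i ->
  ~ has_F2_factor_End M ->
  ~ has_F2_factor_End E.
Proof. by move=> hull noM /(F2_factor_restricts hull). Qed.
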